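(* Let $d\ge 1$ and let $\lambda=(\lambda_1,\dots,\lambda_d)$ be a vector of positive integers with $\sum_{i=1}^d\lambda_i=n\ge 2$. For each integer $b$ with $0\le b<n-1$, the point \[ p(b)=\left(\left(\sum_{i=1}^d\left\lceil \frac{b\lambda_i}{n-1}\right\rceil\right)-b,\; \left\lceil \frac{b\lambda_1}{n-1}\right\rceil,\;\dots,\;\left\lceil \frac{b\lambda_d}{n-1}\right\rceil\right)\in\mathbb{Z}^{d+1} \] lies in $\Pi_\lambda$, the points $p(0),\dots,p(n-2)$ are distinct, and every point of $\Pi_\lambda\cap\mathbb{Z}^{d+1}$ is of the form $p(b)$ for some $0\le b<n-1$. That is, $b\mapsto p(b)$ is a bijection from $\{0,1,\dots,n-2\}$ onto $\Pi_\lambda\cap\mathbb{Z}^{d+1}$.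
   Context: $e_1,\dots,e_d$ are the standard basis vectors of $\mathbb{R}^d$, and $\Delta_\lambda=\mathrm{conv}(e_1,\dots,e_d,\lambda)\subset\mathbb{R}^d$. The fundamental parallelepiped of $\Delta_\lambda$ is $\Pi_\lambda=\left\{\sum_{i=1}^d\gamma_i(1,e_i)+\gamma_{d+1}(1,\lambda): 0\le\gamma_i<1 \text{ for all } i\right\}\subset\mathbb{R}^{d+1}$. *)

From HB Require Import structures.
From mathcomp Require Import all_boot all_order all_algebra.
From mathcomp Require Import reals.
Set Implicit Arguments. Unset Strict Implicit. Unset Printing Implicit Defensive.
Import Order.TTheory GRing.Theory Num.Theory.
Local Open Scope ring_scope.

(* Points of R^{d+1} are row vectors 'rV[R]_(d.+1); coordinate ord0 is the
   extra "1" coordinate, and coordinate lift ord0 i (i : 'I_d) is the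
   (i+1)-th coordinate of R^d. *)

Section Defs.
Variables (R : realType) (d : nat).

Definition lift_e (i : 'I_d) : 'rV[R]_(d.+1) :=
  \row_j (if unlift ord0 j is Some k then (k == i)%:R else 1).

Definition lift_lam (lam : 'I_d -> nat) : 'rV[R]_(d.+1) :=
  \row_j (if unlift ord0 j is Some k then (lam k)%:R else 1).

Definition fund_par (lam : 'I_d -> nat) (x : 'rV[R]_(d.+1)) : Prop :=
  exists gam : 'I_d.+1 -> R,
    (forall j, 0 <= gam j < 1) /\
    x = \sum_(i < d) gam (lift ord_max i) *: lift_e i
        + gam ord_max *: lift_lam lam.

Definition int_pt (z : 'rV[int]_(d.+1)) : 'rV[R]_(d.+1) := map_mx intr z.

Definition cl (lam : 'I_d -> nat) (b : nat) (i : 'I_d) : int :=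
  Num.ceil (((b * lam i)%:R : R) / ((\sum_(k < d) lam k)%N.-1)%:R).

Definition pt (lam : 'I_d -> nat) (b : nat) : 'rV[int]_(d.+1) :=
  \row_j (if unlift ord0 j is Some i then cl lam b i
          else (\sum_(i < d) cl lam b i) - b%:Z).
End Defs.

(* Write a point of R^(d+1) as x = sum_i g_i (1, e_i) + t (1, lambda).  Its
   coordinates are x_0 = sum_i g_i + t and x_i = g_i + t lambda_i, so the
   linear form "sum of the last d coordinates minus the first one" takes the
   value t (n - 1) on x.  For an integer point of Pi_lambda this value is an
   integer b with 0 <= b < n - 1, and then x_i = g_i + b lambda_i / (n - 1)
   with 0 <= g_i < 1 forces x_i = ceil (b lambda_i / (n - 1)), i.e. x = p(b).
   Conversely p(b) is such a combination with t = b / (n - 1), and b is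
   recovered from p(b) as the value of that linear form, so p is injective. *)

From HB Require Import structures.
From mathcomp Require Import all_boot all_order all_algebra.
From mathcomp Require Import reals.
From mathcomp Require Import ring lra.
Import Order.TTheory GRing.Theory Num.Theory.
Local Open Scope ring_scope.

Section Excess.
Variables (V : zmodType) (d : nat).

Definition excess (x : 'rV[V]_(d.+1)) : V :=
  \sum_(k < d) x 0 (lift ord0 k) - x 0 ord0.

Lemma row_eq_excess (x y : 'rV[V]_(d.+1)) :
  (forall k, x 0 (lift ord0 k) = y 0 (lift ord0 k)) ->
  excess x = excess y -> x = y.
Proof.
move=> eq_lift; rewrite /excess (eq_bigr _ (fun k _ => eq_lift k)).
move=> /addrI /oppr_inj eq0; apply/rowP => j.
by case: (unliftP ord0 j) => [k ->|->].
Qed.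

End Excess.

Arguments excess {V d} x.
Arguments row_eq_excess {V d} x y.

Lemma excess_map_intr (R : pzRingType) (d : nat) (z : 'rV[int]_(d.+1)) :
  excess (map_mx intr z : 'rV[R]_(d.+1)) = (excess z)%:~R.
Proof. by rewrite /excess intrB rmorph_sum /=; under eq_bigr do rewrite mxE; rewrite mxE. Qed.

Section ParallelepipedCoordinates.
Variables (R : realType) (d : nat) (lam : 'I_d -> nat).

Definition par_point (g : 'I_d -> R) (t : R) : 'rV[R]_(d.+1) :=
  \sum_(i < d) g i *: lift_e R i + t *: lift_lam R lam.

Lemma par_point_lift g t k :
  par_point g t 0 (lift ord0 k) = g k + t * (lam k)%:R.
Proof.
rewrite /par_point !mxE summxE (bigD1 k) //= big1 ?addr0.
  by rewrite !mxE liftK eqxx mulr1.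
by move=> i /negbTE neq_ik; rewrite !mxE liftK eq_sym neq_ik mulr0.
Qed.

Lemma par_point0 g t : par_point g t 0 ord0 = \sum_(i < d) g i + t.
Proof.
rewrite /par_point !mxE summxE unlift_none mulr1.
by congr (_ + _); apply: eq_bigr => i _; rewrite !mxE unlift_none mulr1.
Qed.

Lemma excess_par_point g t :
  excess (par_point g t) = t * ((\sum_(i < d) lam i)%:R - 1).
Proof.
rewrite /excess par_point0; under eq_bigr do rewrite par_point_lift.
rewrite big_split /= -mulr_sumr natr_sum; ring.
Qed.

Lemma fund_parP x :
  fund_par lam x <->
  exists2 g : 'I_d -> R, (forall i, 0 <= g i < 1) &
    exists2 t, 0 <= t < 1 & x = par_point g t.
Proof.
split=> [[gam [gam_itv ->]]|[g g_itv [t t_itv ->]]].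
  by exists (fun i => gam (lift ord_max i)) => // ; exists (gam ord_max).
exists (fun j => if unlift ord_max j is Some i then g i else t); split.
  by move=> j /=; case: (unliftP ord_max j).
rewrite /par_point unlift_none.
by congr (_ + _); apply: eq_bigr => i _; rewrite liftK.
Qed.

End ParallelepipedCoordinates.

Section LatticePoints.
Variables (R : realType) (d : nat) (lam : 'I_d -> nat).

Let N := (\sum_(i < d) lam i).-1.

Lemma natr_sum_lam_pred : (0 < \sum_(i < d) lam i)%N ->
  (\sum_(i < d) lam i)%:R - 1 = N%:R :> R.
Proof. by move=> lam_gt0; rewrite -{1}(prednK lam_gt0) -natr1 addrK. Qed.

Lemma excess_pt b : excess (pt R lam b) = b%:Z.
Proof.
rewrite /excess mxE unlift_none; under eq_bigr do rewrite mxE liftK.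
by rewrite opprB addrC subrK.
Qed.

Lemma pt_inj : injective (pt R lam).
Proof. by move=> b1 b2 eq_pt; apply/eqP; rewrite -eqz_nat -!excess_pt eq_pt. Qed.

Lemma cl_eq b k (z : int) :
  0 <= (z%:~R : R) - (b * lam k)%:R / N%:R < 1 -> cl R lam b k = z.
Proof. by move=> /andP[? ?]; apply: ceil_def; rewrite intrB /=; apply/andP; split; lra. Qed.

Lemma pt_fund_par b : (b < N)%N -> fund_par lam (int_pt R (pt R lam b)).
Proof.
move=> lt_bN; have N_pos : (0 < N)%N := leq_ltn_trans (leq0n b) lt_bN.
have N_gt0 : (0 : R) < N%:R by rewrite ltr0n.
apply/fund_parP.
exists (fun k => (cl R lam b k)%:~R - (b * lam k)%:R / N%:R).
  move=> k; have := ceil_itv (((b * lam k)%:R : R) / N%:R).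
  by rewrite intrB /= => /andP[? ?]; apply/andP; split; lra.
exists (b%:R / N%:R).
  by rewrite divr_ge0 //= ltr_pdivrMr // mul1r ltr_nat.
apply: row_eq_excess => [k|].
  by rewrite par_point_lift /int_pt /pt !mxE liftK natrM; field; rewrite gt_eqF.
rewrite excess_par_point excess_map_intr excess_pt.
rewrite natr_sum_lam_pred ?(leq_trans N_pos (leq_pred _)) //.
by field; rewrite gt_eqF.
Qed.

Lemma fund_par_int_pt z : (1 < \sum_(i < d) lam i)%N ->
  fund_par lam (int_pt R z) -> exists2 b, (b < N)%N & z = pt R lam b.
Proof.
move=> lam_gt1 /fund_parP[g g_itv [t /andP[t_ge0 t_lt1] eq_z]].
have N_gt0 : (0 : R) < N%:R by rewrite ltr0n -ltnS prednK // ltnW.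
have excess_z : (excess z)%:~R = t * N%:R :> R.
  rewrite -excess_map_intr -[map_mx _ _]/(int_pt R z) eq_z excess_par_point.
  by rewrite natr_sum_lam_pred // ltnW.
have [b excess_b] : exists b : nat, excess z = b%:Z.
  by exists `|excess z|%N; rewrite gez0_abs // -(ler0z R) excess_z mulr_ge0.
have tN : b%:R = t * N%:R :> R by rewrite -excess_z excess_b.
exists b; first by rewrite -(ltr_nat R) tN gtr_pMl.
apply: row_eq_excess => [k|]; last by rewrite excess_pt.
have := congr1 (fun x : 'rV[R]_(d.+1) => x 0 (lift ord0 k)) eq_z.
rewrite par_point_lift /int_pt /pt !mxE liftK /= => z_k.
apply/esym/cl_eq; rewrite z_k natrM tN [t * _ * _]mulrAC mulfK ?gt_eqF //.
by rewrite addrK.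
Qed.

End LatticePoints.

Theorem proposition2p12 (R : realType) (d : nat) (lam : 'I_d -> nat) :
  (1 <= d)%N ->
  (forall i, (0 < lam i)%N) ->
  (2 <= \sum_(i < d) lam i)%N ->
  [/\ (forall b : nat, (b < (\sum_(i < d) lam i).-1)%N ->
          fund_par lam (@int_pt R d (pt R lam b))),
      (forall b1 b2 : nat, (b1 < (\sum_(i < d) lam i).-1)%N ->
          (b2 < (\sum_(i < d) lam i).-1)%N ->
          pt R lam b1 = pt R lam b2 -> b1 = b2)
    & (forall z : 'rV[int]_(d.+1), fund_par lam (@int_pt R d z) ->
          exists2 b : nat, (b < (\sum_(i < d) lam i).-1)%N & z = pt R lam b)].
Proof.
move=> _ _ lam_gt1; split.
- exact: pt_fund_par.
- by move=> b1 b2 _ _; apply: pt_inj.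
- by move=> z; apply: fund_par_int_pt.
Qed.
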